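(* Let $r,s$ be positive integers, let $Q\subseteq [r]\times[s]$, and let $\phi_Q:\mathbb{K}[z_{jk} : (j,k)\in Q]\to \mathbb{K}[x_j,y_k : j\in[r],k\in[s]]$ be the ring homomorphism $z_{jk}\mapsto x_jy_k$, with kernel $I_Q=\ker(\phi_Q)$. Let $m=x_{j_1}x_{j_2}\cdots x_{j_d}$ be a monomial in $\mathbb{K}[x,y]$. Then \[ \phi_Q^{-1}(\langle m\rangle)=\langle z_{j_1k_1}z_{j_2k_2}\cdots z_{j_dk_d} : k_1,\dots,k_d\in[s],\ (j_\ell,k_\ell)\in Q \text{ for all } \ell\rangle + I_Q. \] Similarly, if $n=y_{k_1}y_{k_2}\cdots y_{k_d}$ is a monomial in $\mathbb{K}[x,y]$, then \[ \phi_Q^{-1}(\langle n\rangle)=\langle z_{j_1k_1}z_{j_2k_2}\cdots z_{j_dk_d} : j_1,\dots,j_d\in[r],\ (j_\ell,k_\ell)\in Q \text{ for all } \ell\rangle + I_Q. \]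
   Context: $\mathbb{K}$ is a field and $[r]=\{1,\dots,r\}$. Here $\langle m\rangle$ denotes the ideal of $\mathbb{K}[x,y]$ generated by $m$, and $\phi_Q^{-1}$ denotes the preimage (contraction) of an ideal under $\phi_Q$. *)

From HB Require Import structures.
From mathcomp Require Import all_boot all_order all_algebra.
From mathcomp Require Import mpoly.
Set Implicit Arguments. Unset Strict Implicit. Unset Printing Implicit Defensive.
Import GRing.Theory.
Local Open Scope ring_scope.

Definition in_ideal (R : comPzRingType) (S : R -> Prop) (p : R) : Prop :=
  exists (gs cs : seq R), (forall g, g \in gs -> S g) /\
    p = \sum_(i < size gs) cs`_i * gs`_i.

Definition xv (K : fieldType) (r s : nat) (j : 'I_r) : {mpoly K[r + s]} :=
  'X_(lshift s j).
Definition yv (K : fieldType) (r s : nat) (k : 'I_s) : {mpoly K[r + s]} :=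
  'X_(rshift r k).
Arguments xv K r s j : clear implicits.
Arguments yv K r s k : clear implicits.

(* K[z_q : q in Q] = {mpoly K[#|Q|]}; the variable with index i : 'I_#|Q|
   is z_(enum_val i), where enum_val i is the i-th element of Q. *)
Definition zpair (r s : nat) (Q : {set 'I_r * 'I_s}) (i : 'I_#|Q|) : 'I_r * 'I_s :=
  enum_val i.

Definition phiQ (K : fieldType) (r s : nat) (Q : {set 'I_r * 'I_s})
  (p : {mpoly K[#|Q|]}) : {mpoly K[r + s]} :=
  mmap (@mpolyC _ K)
    (fun i : 'I_#|Q| => xv K r s (zpair i).1 * yv K r s (zpair i).2) p.

Arguments phiQ K r s Q p : clear implicits.

(* The map phi : z_i |-> x_(F i) y_(G i) sends each monomial z^u to a
   monomial, so p splits as a + b, where a collects the terms z^u whose image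
   is divisible by m = x_(t 1)...x_(t d).  If m divides phi p, then at every
   exponent not above that of m the coefficients of phi p and phi b agree and
   vanish, so phi b = 0.  As m involves no y-variable, m | phi (z^u) forces
   z^u to have a factor z_(k 1)...z_(k d) with F (k l) = t l, a generator of
   the ideal.  The y-case is the x-case with the two families of variables
   exchanged. *)

From HB Require Import structures.
From mathcomp Require Import all_boot all_order all_algebra.
From mathcomp Require Import mpoly.
From mathcomp Require Import zify.
Set Implicit Arguments. Unset Strict Implicit. Unset Printing Implicit Defensive.
Import GRing.Theory.
Local Open Scope ring_scope.

Section IdealMembership.
Variables (R : comPzRingType) (S : R -> Prop).

Lemma in_ideal0 : in_ideal S 0.
Proof. by exists [::], [::]; rewrite big_ord0. Qed.

Lemma in_ideal_gen g : S g -> in_ideal S g.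
Proof.
move=> Sg; exists [:: g], [:: 1]; split; last by rewrite big_ord1 mul1r.
by move=> h; rewrite inE => /eqP->.
Qed.

Lemma in_idealD a b : in_ideal S a -> in_ideal S b -> in_ideal S (a + b).
Proof.
move=> [gs1 [cs1 [S1 ->]]] [gs2 [cs2 [S2 ->]]].
exists (gs1 ++ gs2), (mkseq (nth 0 cs1) (size gs1) ++ cs2); split.
  by move=> g; rewrite mem_cat => /orP[/S1|/S2].
rewrite size_cat big_split_ord /=; congr (_ + _); apply: eq_bigr => i _.
  by rewrite !nth_cat size_mkseq ltn_ord nth_mkseq.
by rewrite !nth_cat size_mkseq ltnNge leq_addr /= addKn.
Qed.

Lemma in_idealMl c a : in_ideal S a -> in_ideal S (c * a).
Proof.
move=> [gs [cs [Sgs ->]]]; exists gs, (mkseq (fun i => c * cs`_i) (size gs)).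
split=> //; rewrite mulr_sumr; apply: eq_bigr => i _.
by rewrite nth_mkseq // mulrA.
Qed.

Lemma in_ideal_sum (I : Type) (s : seq I) (P : pred I) (f : I -> R) :
  (forall x, P x -> in_ideal S (f x)) -> in_ideal S (\sum_(x <- s | P x) f x).
Proof. exact: (big_ind (in_ideal S) in_ideal0 in_idealD). Qed.

End IdealMembership.

Lemma rmorph_in_ideal_dvd (R S : comPzRingType) (f : {rmorphism R -> S})
    (P : R -> Prop) (M : S) a :
  (forall g, P g -> exists q, f g = M * q) -> in_ideal P a -> exists q, f a = M * q.
Proof.
move=> Pdvd [gs [cs [Pgs ->]]]; rewrite rmorph_sum.
apply: (big_ind (fun x => exists q, x = M * q)) => [|_ _ [q1 ->] [q2 ->]|i _].
- by exists 0; rewrite mulr0.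
- by exists (q1 + q2); rewrite mulrDr.
- have [q fg] := Pdvd _ (Pgs _ (mem_nth 0 (ltn_ord i))).
  by exists (f cs`_i * q); rewrite rmorphM fg mulrCA.
Qed.

Section MonomialCoefficients.
Variables (R : nzRingType) (n : nat).

Lemma mcoeff_sumX (I : Type) (s : seq I) (P : pred I) (c : I -> R)
    (g : I -> 'X_{1..n}) mu :
  (\sum_(x <- s | P x) c x *: 'X_[g x])@_mu = \sum_(x <- s | P x && (g x == mu)) c x.
Proof.
rewrite raddf_sum /= big_mkcondr /=; apply: eq_bigr => x _.
by rewrite mcoeffZ mcoeffX; case: eqP; rewrite ?mulr1 ?mulr0.
Qed.

Lemma mcoeffXM_eq0 (m mu : 'X_{1..n}) (q : {mpoly R[n]}) :
  ~~ (m <= mu)%MM -> ('X_[m] * q)@_mu = 0.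
Proof.
move=> m_mu; apply/eqP; rewrite mcoeff_eq0; apply: contra m_mu.
move/msuppM_le/allpairsP => [[m1 m2] /= [+ _ ->]].
by rewrite msuppX mem_seq1 => /eqP->; rewrite lem_addr.
Qed.

End MonomialCoefficients.

Section EdgeMonomial.
Variables (n N : nat) (F G : 'I_n -> 'I_N).

Definition edge_mnm (u : 'X_{1..n}) : 'X_{1..N} :=
  [multinom (\sum_i u i * ((F i == k) + (G i == k)))%N | k < N].

Lemma edge_mnmE u k : edge_mnm u k = (\sum_i u i * ((F i == k) + (G i == k)))%N.
Proof. exact: mnmE. Qed.

Lemma edge_mnmD u v : edge_mnm (u + v)%MM = (edge_mnm u + edge_mnm v)%MM.
Proof.
apply/mnmP => k; rewrite mnmDE !edge_mnmE -big_split; apply: eq_bigr => i _.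
by rewrite mnmDE mulnDl.
Qed.

Lemma edge_mnm1 i : edge_mnm U_(i) = (U_(F i) + U_(G i))%MM.
Proof.
apply/mnmP => k; rewrite edge_mnmE !mnmDE !mnm1E (bigD1 i) //= mnm1E eqxx mul1n.
by rewrite big1 ?addn0 // => j /negbTE; rewrite mnm1E eq_sym => ->.
Qed.

Lemma edge_mnm_support k u :
  (forall i, G i != k) -> (U_(k) <= edge_mnm u)%MM ->
  exists2 i, (U_(i) <= u)%MM & F i = k.
Proof.
move=> Gk; case: (pickP [pred i | (u i != 0%N) && (F i == k)]).
  by move=> i /andP[ui /eqP Fi]; exists i; rewrite ?lep1mP.
move=> none; rewrite lep1mP edge_mnmE big1 ?eqxx // => i _; move: (none i) => /=.
rewrite (negbTE (Gk i)) addn0 /=.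
by case: (F i == k); rewrite ?andbT ?andbF ?muln0 // => /negbFE/eqP->.
Qed.

Lemma edge_mnm_lift d (t : 'I_d -> 'I_N) u :
  (forall i l, G i != t l) -> (\sum_(l < d) U_(t l) <= edge_mnm u)%MM ->
  exists2 kk : 'I_d -> 'I_n, (forall l, F (kk l) = t l) & (\sum_(l < d) U_(kk l) <= u)%MM.
Proof.
elim: d t u => [|d IH] t u Gt le_tu.
  exists (ffun0 (card_ord 0)) => [[] //|].
  by rewrite big_ord0; apply/mnm_lepP => k; rewrite mnm0E.
rewrite big_ord_recl in le_tu.
have [i ui Fi] := edge_mnm_support (Gt^~ ord0) (lepm_trans (lem_addr _ _) le_tu).
set u' := (u - U_(i))%MM; have u_eq : u = (u' + U_(i))%MM by rewrite submK.
have [|kk Fkk le_kk] := IH (fun l => t (lift ord0 l)) u' (fun j l => Gt j _).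
  have rest_Gi : (\sum_(l < d) U_(t (lift ord0 l)))%MM (G i) = 0%N.
    by rewrite mnm_sumE big1 // => l _; rewrite mnm1E eq_sym (negbTE (Gt _ _)).
  apply/mnm_lepP => k; move/mnm_lepP/(_ k): le_tu.
  rewrite u_eq edge_mnmD edge_mnm1 !mnmDE !mnm1E Fi.
  by case: (eqVneq (G i) k) => [<-|_]; rewrite ?rest_Gi; lia.
exists (fun l => if unlift ord0 l is Some l' then kk l' else i).
  by move=> l; case: unliftP => [l' ->|->].
rewrite big_ord_recl unlift_none u_eq addmC.
under eq_bigr do rewrite liftK.
by apply/mnm_lepP => k; rewrite !mnmDE leq_add2r; apply/mnm_lepP.
Qed.

End EdgeMonomial.

Section RmorphPreimage.
Variables (R : comNzRingType) (n N nx ny : nat).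
Variables (ix : 'I_nx -> 'I_N) (iy : 'I_ny -> 'I_N).
Hypotheses (ix_inj : injective ix) (ix_neq_iy : forall i j, ix i != iy j).
Variables (F : 'I_n -> 'I_nx) (G : 'I_n -> 'I_ny).
Variable phi : {rmorphism {mpoly R[n]} -> {mpoly R[N]}}.
Hypotheses (phiC : forall c, phi c%:MP = c%:MP)
  (phiX : forall i, phi 'X_i = 'X_(ix (F i)) * 'X_(iy (G i))).

Local Notation edge := (edge_mnm (ix \o F) (iy \o G)).

Lemma rmorph_mpolyX u : phi 'X_[u] = 'X_[edge u].
Proof.
rewrite -mmap1_id /mmap1 rmorph_prod.
under eq_bigr do rewrite rmorphXn phiX -mpolyXD.
rewrite mprodXnE; congr 'X_[_]; apply/mnmP => k.
rewrite edge_mnmE mnm_sumE; apply: eq_bigr => i _.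
by rewrite mulmnE mnmDE !mnm1E mulnC.
Qed.

Lemma rmorph_sumX (I : Type) (s : seq I) (P : pred I) (c : I -> R) (g : I -> 'X_{1..n}) :
  phi (\sum_(x <- s | P x) c x *: 'X_[g x]) = \sum_(x <- s | P x) c x *: 'X_[edge (g x)].
Proof.
rewrite rmorph_sum; apply: eq_bigr => x _.
by rewrite -!mul_mpolyC rmorphM phiC rmorph_mpolyX.
Qed.

Variables (d : nat) (t : 'I_d -> 'I_nx).

Local Notation m_t := (\sum_(l < d) U_(ix (t l)))%MM.
Local Notation lifts := (fun g : {mpoly R[n]} => exists kk : 'I_d -> 'I_n,
  (forall l, F (kk l) = t l) /\ g = \prod_(l < d) 'X_(kk l)).

Lemma in_ideal_lifts_mpolyX u : (m_t <= edge u)%MM -> in_ideal lifts 'X_[u].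
Proof.
move=> le_u; have [|kk Fkk le_kk] := edge_mnm_lift _ le_u.
  by move=> i l; rewrite eq_sym ix_neq_iy.
rewrite -(submK le_kk) mpolyXD -mprodXE; apply/in_idealMl/in_ideal_gen.
by exists kk; split=> // l; apply: ix_inj (Fkk l).
Qed.

Lemma rmorph_lifts_dvd g : lifts g -> exists q, phi g = \prod_(l < d) 'X_(ix (t l)) * q.
Proof.
move=> [kk [Fkk ->]]; exists (\prod_(l < d) 'X_(iy (G (kk l)))).
by rewrite rmorph_prod -big_split; apply: eq_bigr => l _; rewrite phiX Fkk.
Qed.

Lemma rmorph_nondivisible_terms_eq0 p q : phi p = 'X_[m_t] * q ->
  phi (\sum_(u <- msupp p | ~~ (m_t <= edge u)%MM) p@_u *: 'X_[u]) = 0.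
Proof.
move=> phi_p; apply/mpolyP => mu; rewrite mcoeff0 rmorph_sumX mcoeff_sumX.
have [le_mu|lt_mu] := boolP (m_t <= mu)%MM.
  by rewrite big1 // => u /andP[+ /eqP edge_u]; rewrite edge_u le_mu.
rewrite -[RHS](mcoeffXM_eq0 q lt_mu) -phi_p [in RHS](mpolyE p) rmorph_sumX mcoeff_sumX.
by apply: eq_bigl => u; case: eqP => [->|]; rewrite ?andbF ?lt_mu.
Qed.

Lemma rmorph_preimage_mprodX p :
  (exists q, phi p = \prod_(l < d) 'X_(ix (t l)) * q) <->
  (exists a b, in_ideal lifts a /\ phi b = 0 /\ p = a + b).
Proof.
split=> [[q phi_p] | [a [b [a_lifts [phi_b0 ->]]]]]; last first.
  have [q phi_a] := rmorph_in_ideal_dvd rmorph_lifts_dvd a_lifts.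
  by exists q; rewrite rmorphD phi_b0 addr0.
pose P u := (m_t <= edge u)%MM.
exists (\sum_(u <- msupp p | P u) p@_u *: 'X_[u]).
exists (\sum_(u <- msupp p | ~~ P u) p@_u *: 'X_[u]).
split; [|split].
- apply: in_ideal_sum => u /in_ideal_lifts_mpolyX; rewrite -mul_mpolyC; exact: in_idealMl.
- by apply: (rmorph_nondivisible_terms_eq0 (q := q)); rewrite -mprodXE.
- by rewrite [LHS]mpolyE (bigID P).
Qed.

End RmorphPreimage.

Section PhiQ.
Variables (K : fieldType) (r s : nat) (Q : {set 'I_r * 'I_s}).

Lemma phiQC c : phiQ K r s Q c%:MP = c%:MP.
Proof. exact: mmapC. Qed.

Lemma phiQX i : phiQ K r s Q 'X_i = xv K r s (zpair i).1 * yv K r s (zpair i).2.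
Proof. by rewrite /phiQ mmapX mmap1U. Qed.

End PhiQ.

Theorem lemma3p5 (K : fieldType) (r s : nat) (hr : (0 < r)%N) (hs : (0 < s)%N)
  (Q : {set 'I_r * 'I_s}) (d : nat) :
  (* x-monomial m = x_{j_1} ... x_{j_d} *)
  (forall (j : 'I_d -> 'I_r) (p : {mpoly K[#|Q|]}),
     (exists q : {mpoly K[r + s]},
        phiQ K r s Q p = (\prod_(l < d) xv K r s (j l)) * q)
     <->
     (exists a b : {mpoly K[#|Q|]},
        in_ideal (fun g : {mpoly K[#|Q|]} =>
                    exists kk : 'I_d -> 'I_#|Q|,
                      (forall l, (zpair (kk l)).1 = j l) /\
                      g = \prod_(l < d) 'X_(kk l)) a
        /\ phiQ K r s Q b = 0 /\ p = a + b))
  /\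
  (* y-monomial n = y_{k_1} ... y_{k_d} *)
  (forall (k : 'I_d -> 'I_s) (p : {mpoly K[#|Q|]}),
     (exists q : {mpoly K[r + s]},
        phiQ K r s Q p = (\prod_(l < d) yv K r s (k l)) * q)
     <->
     (exists a b : {mpoly K[#|Q|]},
        in_ideal (fun g : {mpoly K[#|Q|]} =>
                    exists jj : 'I_d -> 'I_#|Q|,
                      (forall l, (zpair (jj l)).2 = k l) /\
                      g = \prod_(l < d) 'X_(jj l)) a
        /\ phiQ K r s Q b = 0 /\ p = a + b)).
Proof.
split=> [j p | k p].
- exact: (rmorph_preimage_mprodX (@lshift_inj r s) (fun i j => negbT (eq_lrshift i j))
            (phiQC Q) (phiQX K (Q:=Q)) j p).
- have phiQX_yx i : phiQ K r s Q 'X_i = yv K r s (zpair i).2 * xv K r s (zpair i).1.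
    by rewrite phiQX mulrC.
  exact: (rmorph_preimage_mprodX (@rshift_inj r s) (fun i j => negbT (eq_rlshift i j))
            (phiQC Q) phiQX_yx k p).
Qed.
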